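(* Let $A<0<B$ be integers and let $\mu\in\mathcal M_0(\mathbb Z)$ satisfy $\mu([A,B])=1$, $\mu(\{A\})>0$, $\mu(\{B\})>0$. Define $$\mathcal R_\mu=\{\mathbf r\in[0,1]^{\mathbb Z}: r_i=1\text{ for } i\notin(A,B),\ \text{and } \mathbb P(S_{\tau(\mathbf r)}=i)\le\mu(\{i\})\text{ for } i\in(A,B)\}.$$ If $\mathbf r,\mathbf r'\in\mathcal R_\mu$, then $\tilde{\mathbf r}\in\mathcal R_\mu$, where $\tilde r_i=r_i\vee r'_i$ for all $i\in\mathbb Z$.
   Context: $S=(S_t)_{t\ge0}$ is a simple symmetric random walk on $\mathbb Z$ with $S_0=0$ (discrete time). $\mathcal M_0(\mathbb Z)$ is the set of probability measures on $\mathbb Z$ with finite first moment and mean zero. For $\mathbf r=(r_x)_{x\in\mathbb Z}\in[0,1]^{\mathbb Z}$, let $\{\xi_{t,x}\}_{t\ge0,x\in\mathbb Z}$ be Bernoulli random variables, mutually independent and independent of $S$, with $\mathbb P(\xi_{t,x}=0)=r_x=1-\mathbb P(\xi_{t,x}=1)$, and $\tau(\mathbf r):=\inf\{t\ge0:\xi_{t,S_t}=0\}$ (the law of $S_{\tau(\mathbf r)}$ depends only on $\mathbf r$). *)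

From Stdlib Require Import Reals ZArith.
Open Scope R_scope.

Definition sum_sym (f : Z -> R) (n : nat) : R :=
  sum_f_R0 (fun k => f (Z.of_nat k - Z.of_nat n)%Z) (2 * n).

(* mu is in M_0(Z): a probability measure on Z (given by its mass function)
   with finite first moment and mean zero. *)
Definition M0 (mu : Z -> R) : Prop :=
  (forall x, 0 <= mu x) /\
  Un_cv (sum_sym mu) 1 /\
  (exists m, Un_cv (sum_sym (fun x => Rabs (IZR x) * mu x)) m) /\
  Un_cv (sum_sym (fun x => IZR x * mu x)) 0.

Definition rates (r : Z -> R) : Prop := forall x, 0 <= r x <= 1.

(* q r t y = P(S_t = y, tau(r) >= t): the walk is at y at time t and has not
   been killed at times 0..t-1.  At each time s, the walk at x is killed
   (xi_{s,x} = 0) with probability r x, independently. *)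
Fixpoint q (r : Z -> R) (t : nat) (y : Z) : R :=
  match t with
  | O => if Z.eqb y 0 then 1 else 0
  | S t' => / 2 * (q r t' (y - 1)%Z * (1 - r (y - 1)%Z))
          + / 2 * (q r t' (y + 1)%Z * (1 - r (y + 1)%Z))
  end.

(* exit_prob r i p : P(S_{tau(r)} = i) = p, i.e.
   p = sum_{t>=0} P(S_t = i, tau >= t) * r_i  (= sum_t P(tau = t, S_t = i)). *)
Definition exit_prob (r : Z -> R) (i : Z) (p : R) : Prop :=
  infinite_sum (fun t => q r t i * r i) p.

Definition R_mu (A B : Z) (mu : Z -> R) (r : Z -> R) : Prop :=
  rates r /\
  (forall i, (i <= A \/ B <= i)%Z -> r i = 1) /\
  (forall i, (A < i < B)%Z -> exists p, exit_prob r i p /\ p <= mu i).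

Definition sum_Z_interval (f : Z -> R) (A B : Z) : R :=
  sum_f_R0 (fun k => f (A + Z.of_nat k)%Z) (Z.to_nat (B - A)).

(* Raising the killing rates pointwise can only lower the probability
   [q r t y] of surviving up to time [t] at [y].  At an interior site [i] the
   rates [r ∨ r'] coincide with whichever of [r], [r'] is larger at [i], so the
   exit mass of [r ∨ r'] at [i] is bounded by the exit mass of that one, which
   is at most [mu i]. *)

From Stdlib Require Import Reals ZArith Lra.
Open Scope R_scope.

Lemma rates_Rmax (r r' : Z -> R) :
  rates r -> rates r' -> rates (fun x => Rmax (r x) (r' x)).
Proof.
  intros Hr Hr' x; destruct (Hr x), (Hr' x).
  unfold Rmax; destruct Rle_dec; lra.
Qed.

Lemma survival_step_le (a a' s s' : R) :
  0 <= a' <= a -> 0 <= s -> s <= s' -> s' <= 1 ->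
  0 <= a' * (1 - s') <= a * (1 - s).
Proof.
  intros Ha Hs Hss' Hs'; split.
  - apply Rmult_le_pos; lra.
  - apply Rmult_le_compat; lra.
Qed.

Lemma q_antitone (r1 r2 : Z -> R) :
  rates r1 -> rates r2 -> (forall x, r1 x <= r2 x) ->
  forall t y, 0 <= q r2 t y <= q r1 t y.
Proof.
  intros H1 H2 H12 t; induction t as [|t IH]; intros y; simpl.
  - destruct (Z.eqb y 0); lra.
  - assert (Hdown := survival_step_le _ _ _ _ (IH (y - 1)%Z)
                       (proj1 (H1 (y - 1)%Z)) (H12 (y - 1)%Z) (proj2 (H2 (y - 1)%Z))).
    assert (Hup := survival_step_le _ _ _ _ (IH (y + 1)%Z)
                     (proj1 (H1 (y + 1)%Z)) (H12 (y + 1)%Z) (proj2 (H2 (y + 1)%Z))).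
    lra.
Qed.

Lemma exit_prob_antitone (r1 r2 : Z -> R) (i : Z) (p : R) :
  rates r1 -> rates r2 -> (forall x, r1 x <= r2 x) -> r2 i = r1 i ->
  exit_prob r1 i p -> exists p', exit_prob r2 i p' /\ p' <= p.
Proof.
  intros H1 H2 H12 Hi Hp.
  assert (Hle : forall t, 0 <= q r2 t i * r2 i <= q r1 t i * r1 i).
  { intro t; destruct (q_antitone r1 r2 H1 H2 H12 t i), (H1 i); rewrite Hi.
    split; [apply Rmult_le_pos | apply Rmult_le_compat_r]; lra. }
  destruct (Rseries_CV_comp _ _ Hle (exist _ p Hp)) as [p' Hp'].
  exists p'; split; [exact Hp'|].
  refine (Rle_cv_lim _ Hp' Hp).
  intro N; apply sum_Rle; intros; apply Hle.
Qed.

Lemma exit_prob_Rmax_le (r r' : Z -> R) (i : Z) (m : R) :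
  rates r -> rates r' ->
  (exists p, exit_prob r i p /\ p <= m) ->
  (exists p, exit_prob r' i p /\ p <= m) ->
  exists p, exit_prob (fun x => Rmax (r x) (r' x)) i p /\ p <= m.
Proof.
  intros Hr Hr' [p [Hp Hpm]] [p' [Hp' Hpm']].
  assert (Hmax := rates_Rmax r r' Hr Hr').
  destruct (Rle_dec (r' i) (r i)) as [Hc|Hc].
  - destruct (exit_prob_antitone r _ i p Hr Hmax (fun x => Rmax_l _ _))
      as [q' [Hq Hqp]]; [now rewrite Rmax_left | exact Hp |].
    exists q'; split; [exact Hq | lra].
  - destruct (exit_prob_antitone r' _ i p' Hr' Hmax (fun x => Rmax_r _ _))
      as [q' [Hq Hqp]]; [rewrite Rmax_right; lra | exact Hp' |].
    exists q'; split; [exact Hq | lra].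
Qed.

(* Only the defining conditions of [R_mu] matter. *)
Theorem lemma1 (A B : Z) (mu : Z -> R) (r r' : Z -> R) :
  (A < 0)%Z -> (0 < B)%Z ->
  M0 mu ->
  sum_Z_interval mu A B = 1 ->
  0 < mu A -> 0 < mu B ->
  R_mu A B mu r -> R_mu A B mu r' ->
  R_mu A B mu (fun i => Rmax (r i) (r' i)).
Proof.
  intros _ _ _ _ _ _ [Hr [Hout Hin]] [Hr' [Hout' Hin']].
  split; [exact (rates_Rmax r r' Hr Hr') | split].
  - intros i Hi; rewrite (Hout i Hi), (Hout' i Hi); apply Rmax_left; lra.
  - intros i Hi; exact (exit_prob_Rmax_le r r' i (mu i) Hr Hr' (Hin i Hi) (Hin' i Hi)).
Qed.
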